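(* Let $q\in\mathbb C\setminus\{0\}$, let $\tau$ be a decorated ideal triangulation of $S$ with underlying ideal triangulation $\lambda$. The assignment $F_\tau(X_i)=q^{\delta_{\mu\nu}\sigma_{ts}}H^s_\mu H^t_\nu$, whenever the edge $\lambda_i$ bounds the $s$-side of $\tau_\mu$ and the $t$-side of $\tau_\nu$ (with $\delta$ the Kronecker delta), extends to an algebra homomorphism $F_\tau:\mathcal T^q_\lambda\to\mathcal K^q_\tau$.
   Context: Let $\bar S$ be a closed oriented surface of genus $g$, $S=\bar S\setminus\{v_1,\dots,v_p\}$, $p\ge1$, $m=2g-2+p>0$. A decorated ideal triangulation $\tau$ is an ideal triangulation $\lambda$ of $S$ (triangulation of $\bar S$ with vertex set exactly $\{v_1,\dots,v_p\}$; two sides of a triangle may lie on the same edge), with edges indexed $\lambda_1,\dots,\lambda_{3m}$, whose $2m$ triangles are numbered $\tau_1,\dots,\tau_{2m}$ and each has one marked corner. The sides of each triangle are numbered $0,1,2$ in counterclockwise order, the $0$-side being opposite the marked corner. The Kashaev algebra $\mathcal K^q_\tau$ is generated by $Y_\mu^{\pm1},Z_\mu^{\pm1}$ with relations $Y_\mu Y_\nu=Y_\nu Y_\mu$, $Z_\mu Z_\nu=Z_\nu Z_\mu$, $Y_\mu Z_\nu=Z_\nu Y_\mu$ ($\mu\ne\nu$), $Z_\mu Y_\mu=q^2Y_\mu Z_\mu$; set $H^0_\mu=Y_\mu Z_\mu^{-1}$, $H^1_\mu=Z_\mu$, $H^2_\mu=Y_\mu^{-1}$, and $\sigma_{st}$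 ($s,t\in\{0,1,2\}$) antisymmetric with $\sigma_{10}=\sigma_{02}=\sigma_{21}=1$ (when $\mu=\nu$ the formula for $F_\tau(X_i)$ does not depend on which side is called $s$). The Chekhov–Fock algebra $\mathcal T^q_\lambda$ is generated by $X_1^{\pm1},\dots,X_{3m}^{\pm1}$ with relations $X_iX_j=q^{2\sigma^\lambda_{ij}}X_jX_i$, where $\sigma^\lambda_{ij}=a^\lambda_{ij}-a^\lambda_{ji}$ and $a^\lambda_{ij}$ is the number of corners of triangles of $\lambda$ delimited on the left by $\lambda_i$ and on the right by $\lambda_j$; here a corner lying between two sides of a triangle that are consecutive in the counterclockwise order of its sides is regarded as delimited on the right by the earlier side and on the left by the later side (equivalently, each triangle whose $0,1,2$-sides lie on $\lambda_a,\lambda_b,\lambda_c$ contributes $\sigma_{st}$ to $\sigma^\lambda$ for the pair of edges on its $s$- and $t$-sides). *)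

From HB Require Import structures.
From mathcomp Require Import all_boot all_order all_algebra.
Set Implicit Arguments. Unset Strict Implicit. Unset Printing Implicit Defensive.
Import Order.TTheory GRing.Theory Num.Theory.
Local Open Scope ring_scope.

(* Triangles tau_1..tau_{2m} are 'I_(2*m), edges lambda_1..lambda_{3m}     *)
(* are 'I_(3*m); sides of a triangle are numbered 0,1,2 ('I_3) in         *)
(* counterclockwise order, the 0-side being opposite the marked corner.   *)
(* Each edge is bounded by exactly two sides (of possibly the same        *)
(* triangle).  Gluing the oriented triangles along paired sides           *)
(* (orientation-reversingly) produces the closed oriented surface.        *)
Record dtri (m : nat) := DTri {
  dt_side : 'I_(2 * m) -> 'I_3 -> 'I_(3 * m);
  dt_two : forall i : 'I_(3 * m),
      #|[set ms : 'I_(2 * m) * 'I_3 | dt_side ms.1 ms.2 == i]| = 2%N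
}.

Definition nxt (s : 'I_3) : 'I_3 := ordS s.

(* Corners: (mu, c) is the corner of tau_mu opposite its c-side.  In ccw  *)
(* order the s-side runs from corner (s+1) to corner (s+2).  Gluing the   *)
(* s-side of tau_mu to the t-side of tau_nu reverses orientation, so      *)
(* corner s+1 of mu is identified with corner t+2 of nu and corner s+2 of *)
(* mu with corner t+1 of nu.                                              *)
Definition corner_glue m (tau : dtri m) : rel ('I_(2 * m) * 'I_3) :=
  fun c1 c2 =>
  [exists mu : 'I_(2 * m), exists s : 'I_3, exists nu : 'I_(2 * m),
   exists t : 'I_3,
     [&& (mu, s) != (nu, t), dt_side tau mu s == dt_side tau nu t &
       (((c1 == (mu, nxt s)) && (c2 == (nu, nxt (nxt t)))) ||
        ((c1 == (mu, nxt (nxt s))) && (c2 == (nu, nxt t))))]].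

(* number of vertices (punctures) of the triangulation: classes of corners *)
Definition nverts m (tau : dtri m) : nat :=
  n_comp (corner_glue tau) predT.

Definition tri_adj m (tau : dtri m) : rel 'I_(2 * m) :=
  fun mu nu => [exists s : 'I_3, exists t : 'I_3,
                  dt_side tau mu s == dt_side tau nu t].

Definition tri_connected m (tau : dtri m) : Prop :=
  forall mu nu, connect (tri_adj tau) mu nu.

(* a^lambda_{ij}: number of corners delimited on the left by lambda_i and *)
(* on the right by lambda_j; the corner between the consecutive sides s   *)
(* and s+1 is delimited on the right by side s and on the left by s+1.    *)
Definition a_lam m (tau : dtri m) (i j : 'I_(3 * m)) : nat :=
  (\sum_(mu : 'I_(2 * m)) \sum_(s : 'I_3)
     ((dt_side tau mu (nxt s) == i) && (dt_side tau mu s == j)))%N.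

Definition sigma_lam m (tau : dtri m) (i j : 'I_(3 * m)) : int :=
  (a_lam tau i j)%:Z - (a_lam tau j i)%:Z.

Definition sigma3 (s t : 'I_3) : int :=
  if s == nxt t then 1 else if t == nxt s then -1 else 0.

Definition is_presentation (k : fieldType) (I : Type) (A : algType k)
  (gens : I -> A) (R : forall B : algType k, (I -> B) -> Prop) : Prop :=
  R A gens /\
  forall (B : algType k) (y : I -> B), R B y ->
    (exists f : {lrmorphism A -> B}, forall i, f (gens i) = y i) /\
    (forall f f' : {lrmorphism A -> B},
       (forall i, f (gens i) = y i) -> (forall i, f' (gens i) = y i) ->
       forall a, f a = f' a).

(* Chekhov-Fock algebra: generators (true, i) = X_i, (false, i) = X_i^-1 *)
Definition CF_rel (k : fieldType) (q : k) m (tau : dtri m)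
  (B : algType k) (x : bool * 'I_(3 * m) -> B) : Prop :=
  (forall i, x (true, i) * x (false, i) = 1 /\ x (false, i) * x (true, i) = 1) /\
  (forall i j, x (true, i) * x (true, j)
               = (q ^ (2 * sigma_lam tau i j)) *: (x (true, j) * x (true, i))).

(* Kashaev algebra: generators (e, (true, mu)) = Y_mu^(+-1),              *)
(* (e, (false, mu)) = Z_mu^(+-1), exponent +1 iff e = true.               *)
Definition Yk (B : Type) N (w : bool * (bool * 'I_N) -> B) mu := w (true, (true, mu)).
Definition Yik (B : Type) N (w : bool * (bool * 'I_N) -> B) mu := w (false, (true, mu)).
Definition Zk (B : Type) N (w : bool * (bool * 'I_N) -> B) mu := w (true, (false, mu)).
Definition Zik (B : Type) N (w : bool * (bool * 'I_N) -> B) mu := w (false, (false, mu)).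

Definition kashaev_rel (k : fieldType) (q : k) (N : nat)
  (B : algType k) (w : bool * (bool * 'I_N) -> B) : Prop :=
  (forall mu, Yk w mu * Yik w mu = 1 /\ Yik w mu * Yk w mu = 1 /\
              Zk w mu * Zik w mu = 1 /\ Zik w mu * Zk w mu = 1) /\
  (forall mu nu, Yk w mu * Yk w nu = Yk w nu * Yk w mu) /\
  (forall mu nu, Zk w mu * Zk w nu = Zk w nu * Zk w mu) /\
  (forall mu nu, mu != nu -> Yk w mu * Zk w nu = Zk w nu * Yk w mu) /\
  (forall mu, Zk w mu * Yk w mu = (q ^+ 2) *: (Yk w mu * Zk w mu)).

Definition Hk (B : nzRingType) N (w : bool * (bool * 'I_N) -> B)
  (s : 'I_3) (mu : 'I_N) : B :=
  if val s == 0%N then Yk w mu * Zik w mu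
  else if val s == 1%N then Zk w mu else Yik w mu.

(* F_tau sends X_i to a monomial in the Kashaev generators.  Any two such
   monomials q-commute, with exponent the bilinear antisymmetric form read off
   from the exponents of Y and Z in each triangle, since [Z Y = q^2 Y Z].  For
   the factors [H^s_mu] this form is [2 delta_{mu nu} sigma_{st}], and summing
   it over the two sides of [lambda_i] and the two sides of [lambda_j] gives
   [2 sigma^lambda_{ij}]: the corners of a triangle between consecutive sides
   are exactly what [a^lambda] counts.  So the images of the [X_i] satisfy the
   Chekhov-Fock relations, and [F_tau] exists by the universal property. *)

From HB Require Import structures.
From mathcomp Require Import all_boot all_order all_algebra.
From mathcomp Require Import ring.
Import Order.TTheory GRing.Theory Num.Theory.
Set Implicit Arguments. Unset Strict Implicit. Unset Printing Implicit Defensive.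
Local Open Scope ring_scope.

Section QCommutation.
Variables (k : fieldType) (q : k) (K : algType k).
Hypothesis q_neq0 : q != 0.

Definition qcomm (e : int) (a b : K) := a * b = q ^ e *: (b * a).

Lemma qcommC e (a b : K) : qcomm e a b -> qcomm (- e) b a.
Proof.
by move=> ab; rewrite /qcomm ab scalerA -expfzDr // addNr expr0z scale1r.
Qed.

Lemma qcomm1r (a : K) : qcomm 0 a 1.
Proof. by rewrite /qcomm expr0z scale1r mulr1 mul1r. Qed.

Lemma qcommMl e1 e2 (a b c : K) :
  qcomm e1 a c -> qcomm e2 b c -> qcomm (e1 + e2) (a * b) c.
Proof.
move=> ac bc; rewrite /qcomm -mulrA bc -scalerAr (mulrA a) ac -scalerAl.
by rewrite scalerA -expfzDr // addrC mulrA.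
Qed.

Lemma qcommMr e1 e2 (a b c : K) :
  qcomm e1 a b -> qcomm e2 a c -> qcomm (e1 + e2) a (b * c).
Proof.
move=> ab ac; rewrite -[e1 + e2]opprK opprD; apply: qcommC.
by apply: qcommMl; apply: qcommC.
Qed.

Lemma qcommZl e r (a b : K) : qcomm e a b -> qcomm e (r *: a) b.
Proof. by move=> ab; rewrite /qcomm -scalerAl ab -scalerAr !scalerA mulrC. Qed.

Lemma qcommZr e r (a b : K) : qcomm e a b -> qcomm e a (r *: b).
Proof. by move=> ab; rewrite /qcomm -scalerAr ab -scalerAl !scalerA mulrC. Qed.

Lemma qcommVl e (a a' b : K) :
  a' * a = 1 -> a * a' = 1 -> qcomm e a b -> qcomm (- e) a' b.
Proof.
move=> a'a aa' /qcommC ba.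
rewrite /qcomm -[a' * b]mulr1 -aa' mulrA -(mulrA a' b a) ba -scalerAr -scalerAl.
by rewrite !mulrA a'a mul1r.
Qed.

Lemma qcommVr e (a b b' : K) :
  b' * b = 1 -> b * b' = 1 -> qcomm e a b -> qcomm (- e) a b'.
Proof.
move=> b'b bb' /qcommC ba; rewrite -[e]opprK; apply: qcommC.
exact: qcommVl ba.
Qed.

Lemma qcomm_prod (I J : Type) (a : I -> K) (b : J -> K) (e : I -> J -> int)
    (u : seq I) (v : seq J) :
  (forall i j, qcomm (e i j) (a i) (b j)) ->
  qcomm (\sum_(i <- u) \sum_(j <- v) e i j)
        (\prod_(i <- u) a i) (\prod_(j <- v) b j).
Proof.
move=> ab.
have row i : qcomm (\sum_(j <- v) e i j) (a i) (\prod_(j <- v) b j).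
  elim: v => [|j v IHv]; first by rewrite !big_nil; apply: qcomm1r.
  by rewrite !big_cons; apply: qcommMr.
elim: u => [|i u IHu]; first by rewrite !big_nil -oppr0; apply/qcommC/qcomm1r.
by rewrite !big_cons; apply: qcommMl.
Qed.

Lemma prod_rev_inv (I : Type) (a b : I -> K) (u : seq I) :
  (forall i, a i * b i = 1) ->
  \prod_(i <- u) a i * \prod_(i <- rev u) b i = 1.
Proof.
move=> ab; elim: u => [|i u IHu]; first by rewrite !big_nil mulr1.
rewrite big_cons rev_cons big_rcons /= -mulrA (mulrA (\prod_(j <- u) a j)).
by rewrite IHu mul1r ab.
Qed.

End QCommutation.

Definition flip_gen N (g : bool * (bool * 'I_N)) := (~~ g.1, g.2).

(* [(e, (true, mu))] and [(e, (false, mu))] stand for [Y_mu^(+-1)] and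
   [Z_mu^(+-1)].  [w g * w h = q ^ gen_qexp g h *: (w h * w g)], where on the
   exponent vectors [(a, b)], [(c, d)] of [Y] and [Z] in one triangle the form
   [2 (b c - a d)] comes from [Z Y = q^2 Y Z]. *)
Definition gen_sign N (g : bool * (bool * 'I_N)) : int := if g.1 then 1 else -1.
Definition gen_degY N (g : bool * (bool * 'I_N)) : int :=
  if g.2.1 then gen_sign g else 0.
Definition gen_degZ N (g : bool * (bool * 'I_N)) : int :=
  if g.2.1 then 0 else gen_sign g.

Definition gen_qexp N (g h : bool * (bool * 'I_N)) : int :=
  if g.2.2 == h.2.2 then 2 * (gen_degZ g * gen_degY h - gen_degY g * gen_degZ h)
  else 0.

Lemma flip_genK N : involutive (@flip_gen N).
Proof. by case=> e g; rewrite /flip_gen negbK. Qed.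

Lemma gen_qexp_flipl N (g h : bool * (bool * 'I_N)) :
  gen_qexp (flip_gen g) h = - gen_qexp g h.
Proof.
case: g h => e [b mu] [e' [b' nu]]; rewrite /gen_qexp /gen_degY /gen_degZ /=.
by case: (_ == _); case: b; case: b'; case: e; case: e'.
Qed.

Lemma gen_qexp_flipr N (g h : bool * (bool * 'I_N)) :
  gen_qexp g (flip_gen h) = - gen_qexp g h.
Proof.
case: g h => e [b mu] [e' [b' nu]]; rewrite /gen_qexp /gen_degY /gen_degZ /=.
by case: (_ == _); case: b; case: b'; case: e; case: e'.
Qed.

Definition sigma_side N (a b : 'I_N * 'I_3) : int :=
  if a.1 == b.1 then sigma3 a.2 b.2 else 0.

Lemma sigma3_anti s t : sigma3 t s = - sigma3 s t.
Proof.
by case: s => [[|[|[|?]]] ?] //; case: t => [[|[|[|?]]] ?] //; rewrite /sigma3 /nxt.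
Qed.

Lemma sigma_side_anti N (a b : 'I_N * 'I_3) : sigma_side b a = - sigma_side a b.
Proof. by rewrite /sigma_side eq_sym; case: eqP => _; rewrite ?oppr0 // sigma3_anti. Qed.

Definition side_word N (a : 'I_N * 'I_3) : seq (bool * (bool * 'I_N)) :=
  if val a.2 == 0%N then [:: (true, (true, a.1)); (false, (false, a.1))]
  else if val a.2 == 1%N then [:: (true, (false, a.1))]
  else [:: (false, (true, a.1))].

Lemma side_word_qexp N (a b : 'I_N * 'I_3) :
  \sum_(g <- side_word a) \sum_(h <- side_word b) gen_qexp g h
  = 2 * sigma_side a b.
Proof.
case: a b => mu [[|[|[|?]]] ?] // [nu [[|[|[|?]]] ?]] //.
all: rewrite /side_word /sigma_side /sigma3 /gen_qexp /gen_degY /gen_degZ /=.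
all: by rewrite !big_cons !big_nil /=; case: (mu == nu).
Qed.

Section KashaevMonomials.
Variables (k : fieldType) (q : k) (N : nat) (K : algType k).
Variable w : bool * (bool * 'I_N) -> K.
Hypotheses (q_neq0 : q != 0) (w_rel : kashaev_rel q w).

Local Notation H a := (Hk w a.2 a.1).

Lemma gen_mulV g : w g * w (flip_gen g) = 1.
Proof. by case: w_rel => /(_ g.2.2) + _; case: g => [[] [[] mu]] /= [? [? [? ?]]]. Qed.

Lemma gen_qcomm_pos b mu b' nu :
  qcomm q (gen_qexp (true, (b, mu)) (true, (b', nu)))
    (w (true, (b, mu))) (w (true, (b', nu))).
Proof.
case: w_rel => _ [YY [ZZ [YZ ZY]]].
rewrite /qcomm /gen_qexp /gen_degY /gen_degZ /gen_sign /=.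
case: eqP => [<- | /eqP mu_nu]; case: b; case: b';
  rewrite /= ?(mul0r, mulr0, mul1r, subr0, sub0r, expr0z, scale1r) //.
- exact: (qcommC q_neq0 (ZY mu : qcomm q 2 _ _)).
- exact: ZY.
- exact: YY.
- exact: YZ.
- by rewrite (YZ nu mu) // eq_sym.
- exact: ZZ.
Qed.

Lemma gen_qcomm g h : qcomm q (gen_qexp g h) (w g) (w h).
Proof.
have mulVflip g' : w (flip_gen g') * w g' = 1.
  by have := gen_mulV (flip_gen g'); rewrite flip_genK.
have Vl g' h' : qcomm q (gen_qexp g' h') (w g') (w h') ->
    qcomm q (gen_qexp (flip_gen g') h') (w (flip_gen g')) (w h').
  by move=> gh; rewrite gen_qexp_flipl; apply: qcommVl (mulVflip g') (gen_mulV g') gh.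
have Vr g' h' : qcomm q (gen_qexp g' h') (w g') (w h') ->
    qcomm q (gen_qexp g' (flip_gen h')) (w g') (w (flip_gen h')).
  by move=> gh; rewrite gen_qexp_flipr; apply: qcommVr (mulVflip h') (gen_mulV h') gh.
case: g h => [[] [b mu]] [[] [b' nu]].
- exact: gen_qcomm_pos.
- exact: (Vr (true, (b, mu)) (true, (b', nu)) (gen_qcomm_pos _ _ _ _)).
- exact: (Vl (true, (b, mu)) (true, (b', nu)) (gen_qcomm_pos _ _ _ _)).
- exact: (Vl _ _ (Vr (true, (b, mu)) (true, (b', nu)) (gen_qcomm_pos _ _ _ _))).
Qed.

Lemma Hk_word a : H a = \prod_(g <- side_word a) w g.
Proof.
rewrite /Hk /side_word /Yk /Zk /Yik /Zik.
by case: ifP => _; last case: ifP => _; rewrite !big_cons big_nil ?mulr1.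
Qed.

Lemma Hk_qcomm a b : qcomm q (2 * sigma_side a b) (H a) (H b).
Proof. by rewrite !Hk_word -side_word_qexp; apply: qcomm_prod gen_qcomm. Qed.

Definition Hk_inv a := \prod_(g <- rev (side_word a)) w (flip_gen g).

Lemma Hk_mulV a : H a * Hk_inv a = 1.
Proof. by rewrite Hk_word; apply: prod_rev_inv gen_mulV. Qed.

Lemma Hk_invK a : Hk_inv a * H a = 1.
Proof.
rewrite /Hk_inv Hk_word -{2}(revK (side_word a)).
under [X in _ * X]eq_bigr do rewrite -[g in w g]flip_genK.
by apply: prod_rev_inv => g; apply: gen_mulV.
Qed.

Definition edge_elt a b := q ^ sigma_side b a *: (H a * H b).
Definition edge_inv a b := q ^ (- sigma_side b a) *: (Hk_inv b * Hk_inv a).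

Lemma edge_eltC a b : edge_elt a b = edge_elt b a.
Proof.
rewrite /edge_elt (Hk_qcomm a b) scalerA -expfzDr // sigma_side_anti.
by congr (q ^ _ *: _); rewrite sigma_side_anti; ring.
Qed.

Lemma edge_eltV a b : edge_elt a b * edge_inv a b = 1.
Proof.
rewrite /edge_elt /edge_inv -scalerAl -scalerAr scalerA -expfzDr // subrr.
by rewrite expr0z scale1r -mulrA (mulrA (H b)) Hk_mulV mul1r Hk_mulV.
Qed.

Lemma edge_invK a b : edge_inv a b * edge_elt a b = 1.
Proof.
rewrite /edge_elt /edge_inv -scalerAl -scalerAr scalerA -expfzDr // addNr.
by rewrite expr0z scale1r -mulrA (mulrA (Hk_inv a)) Hk_invK mul1r Hk_invK.
Qed.

Lemma edge_elt_qcomm a b c d :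
  qcomm q (2 * \sum_(x <- [:: a; b]) \sum_(y <- [:: c; d]) sigma_side x y)
    (edge_elt a b) (edge_elt c d).
Proof.
apply/qcommZl/qcommZr.
have := qcomm_prod q_neq0 [:: a; b] [:: c; d] Hk_qcomm.
by rewrite !big_cons !big_nil !mulr1 !addr0 !mulrDr.
Qed.

End KashaevMonomials.

Definition edge_sides m (tau : dtri m) (i : 'I_(3 * m)) :=
  [set a : 'I_(2 * m) * 'I_3 | dt_side tau a.1 a.2 == i].

Lemma sum_sigma3 (f g : pred 'I_3) :
  \sum_s (if f s then \sum_t (if g t then sigma3 s t else 0) else 0) =
  \sum_s ((f (nxt s) && g s) : int) - \sum_s ((g (nxt s) && f s) : int).
Proof.
pose s1 : 'I_3 := lift ord0 (ord0 : 'I_2).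
pose s2 : 'I_3 := lift ord0 (lift ord0 (ord0 : 'I_1)).
have nxt0 : nxt ord0 = s1 by apply: val_inj.
have nxt1 : nxt s1 = s2 by apply: val_inj.
have nxt2 : nxt s2 = ord0 by apply: val_inj.
rewrite !big_ord_recl !big_ord0 -/s1 -/s2 nxt0 nxt1 nxt2 /sigma3 nxt0 nxt1 nxt2.
by case: (f ord0); case: (f s1); case: (f s2);
   case: (g ord0); case: (g s1); case: (g s2).
Qed.

Lemma sum_edge_sides m (tau : dtri m) i (F : 'I_(2 * m) * 'I_3 -> int) :
  \sum_(a in edge_sides tau i) F a =
  \sum_mu \sum_s (if dt_side tau mu s == i then F (mu, s) else 0).
Proof.
rewrite pair_bigA /= -big_mkcond; apply: eq_big => [[mu s]|[mu s] _] //.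
by rewrite inE.
Qed.

Lemma sum_sigma_side_edge m (tau : dtri m) j (a : 'I_(2 * m) * 'I_3) :
  \sum_(b in edge_sides tau j) sigma_side a b =
  \sum_t (if dt_side tau a.1 t == j then sigma3 a.2 t else 0).
Proof.
rewrite sum_edge_sides (bigD1 a.1) //= [X in _ + X]big1 ?addr0 => [|nu nu_a].
  by apply: eq_bigr => t _; rewrite /sigma_side eqxx.
apply: big1 => t _; rewrite /sigma_side /= [a.1 == nu]eq_sym (negbTE nu_a).
by case: ifP.
Qed.

Lemma sigma_lamE m (tau : dtri m) i j :
  sigma_lam tau i j =
  \sum_(a in edge_sides tau i) \sum_(b in edge_sides tau j) sigma_side a b.
Proof.
rewrite sum_edge_sides.
under eq_bigr do under eq_bigr do rewrite sum_sigma_side_edge /=.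
rewrite /sigma_lam /a_lam !(big_morph Posz PoszD (erefl _)) -sumrB.
apply: eq_bigr => mu _; rewrite !(big_morph Posz PoszD (erefl _)).
apply/esym.
exact: (sum_sigma3 (fun s => dt_side tau mu s == i) (fun t => dt_side tau mu t == j)).
Qed.

Lemma enum_edge_sides m (tau : dtri m) i :
  {ab | enum (edge_sides tau i) = [:: ab.1; ab.2]}.
Proof.
have : #|edge_sides tau i| = 2%N by apply: dt_two.
by rewrite cardE; case: (enum _) => [|a [|b []]] // _; exists (a, b).
Qed.

Lemma mem_pair_cases (T : eqType) (x y a b : T) :
  a \in [:: x; y] -> b \in [:: x; y] -> a != b ->
  (a = x /\ b = y) \/ (a = y /\ b = x).
Proof.
by rewrite !inE => /orP[]/eqP-> /orP[]/eqP->; rewrite ?eqxx //; [left | right].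
Qed.

Theorem lemma5p2 (k : fieldType) (q : k) (hq : q != 0)
  (g p m : nat) (hp : (0 < p)%N) (hm : (m + 2 = 2 * g + p)%N) (hm0 : (0 < m)%N)
  (tau : dtri m) (hconn : tri_connected tau) (hverts : nverts tau = p)
  (T K : algType k) (x : bool * 'I_(3 * m) -> T)
  (w : bool * (bool * 'I_(2 * m)) -> K)
  (hT : is_presentation x (CF_rel q tau))
  (hK : is_presentation w (@kashaev_rel k q (2 * m))) :
  exists F : {lrmorphism T -> K},
    forall (i : 'I_(3 * m)) (mu nu : 'I_(2 * m)) (s t : 'I_3),
      (mu, s) != (nu, t) -> dt_side tau mu s = i -> dt_side tau nu t = i ->
      F (x (true, i)) =
        (q ^ (if mu == nu then sigma3 t s else 0)) *: (Hk w s mu * Hk w t nu).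
Proof.
have w_rel := hK.1.
pose ends i := sval (enum_edge_sides tau i).
have endsE i : enum (edge_sides tau i) = [:: (ends i).1; (ends i).2].
  exact: svalP (enum_edge_sides tau i).
pose y (bi : bool * 'I_(3 * m)) := let: (a, b) := ends bi.2 in
  if bi.1 then edge_elt q w a b else edge_inv q w a b.
have y_rel : CF_rel q tau y.
  split=> [i | i j]; rewrite /y /=.
    by case: (ends i) => a b; rewrite edge_eltV ?edge_invK.
  rewrite sigma_lamE -big_enum; under eq_bigr do rewrite -big_enum.
  by rewrite !endsE; case: (ends i) (ends j) => a b [c d]; apply: edge_elt_qcomm.
have [[F F_gens] _] := hT.2 K y y_rel.
exists F => i mu nu s t neq side_i side_i'.
have side_mem a : dt_side tau a.1 a.2 = i -> a \in [:: (ends i).1; (ends i).2].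
  by rewrite -endsE mem_enum inE => ->.
rewrite F_gens /y /=.
have := mem_pair_cases (side_mem (mu, s) side_i) (side_mem (nu, t) side_i') neq.
case: (ends i) => a b /= [[<- <-] | [<- <-]].
  by rewrite /edge_elt /sigma_side eq_sym.
by rewrite edge_eltC // /edge_elt /sigma_side eq_sym.
Qed.
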